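(* Let $R$ be an $n\times n$ irreducible nonnegative matrix with positive left and right eigenvectors $u$ and $v$ for the PF eigenvalue $1$, normalized so that $\langle u,v\rangle=1$. Define $A=D_u^{1/2}D_v^{-1/2}RD_u^{-1/2}D_v^{1/2}$. Then: (1) $\phi(A)=\phi(R)$; (2) $\lambda_i(A)=\lambda_i(R)$ for every $i$; (3) $\|A\|_2=1$; (4) if $R$ is reversible, i.e. $D_uRD_v=D_vR^TD_u$, then $A$ is symmetric.
   Context: $D_x$ denotes the diagonal matrix with the vector $x$ on its diagonal; square roots are entrywise positive. $\|\cdot\|_2$ is the operator norm. For an irreducible nonnegative $H$ with positive PF left/right eigenvectors $u',v'$ (for $A$ these are both $w=D_u^{1/2}D_v^{1/2}\mathbf 1$), the edge expansion is $\phi(H)=\min\phi_S(H)$ over nonempty $S\subseteq[n]$ with $\sum_{i\in S}u'_iv'_i\le\frac12\sum_iu'_iv'_i$, where $\phi_S(H)=\langle\mathbf 1_S,D_{u'}HD_{v'}\mathbf 1_{\overline S}\rangle/\langle\mathbf 1_S,D_{u'}HD_{v'}\mathbf 1\rangle$ and $\mathbf 1_S$ is the indicator vector of $S$. Eigenvalues are listed as $\lambda_1>\operatorname{Re}\lambda_2\ge\dots\ge\operatorname{Re}\lambda_n$. *)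

From HB Require Import structures.
From mathcomp Require Import all_boot all_order all_algebra.
From mathcomp Require Import classical_sets reals.
From mathcomp Require Import complex.
Set Implicit Arguments. Unset Strict Implicit. Unset Printing Implicit Defensive.
Import Order.TTheory GRing.Theory Num.Theory.
Local Open Scope ring_scope.

Definition Dg (R : realType) n (x : 'rV[R]_n) : 'M[R]_n := diag_mx x.

Definition vsqrt (R : realType) n (x : 'rV[R]_n) : 'rV[R]_n :=
  \row_i Num.sqrt (x 0 i).
Definition vinvsqrt (R : realType) n (x : 'rV[R]_n) : 'rV[R]_n :=
  \row_i (Num.sqrt (x 0 i))^-1.

Definition nonneg_mx (R : realType) n (M : 'M[R]_n) : Prop :=
  forall i j, 0 <= M i j.

Definition irreducible_mx (R : realType) n (M : 'M[R]_n) : Prop :=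
  forall i j : 'I_n, exists k : nat, 0 < (M ^+ k) i j.

Definition positive_rv (R : realType) n (x : 'rV[R]_n) : Prop :=
  forall i, 0 < x 0 i.

(* phi_S(H) w.r.t. left/right PF eigenvectors u', v' :
   <1_S, D_u' H D_v' 1_{~S}> / <1_S, D_u' H D_v' 1> *)
Definition phiS (R : realType) n (H : 'M[R]_n) (u v : 'rV[R]_n) (S : {set 'I_n}) : R :=
  (\sum_(i in S) \sum_(j in ~: S) u 0 i * H i j * v 0 j) /
  (\sum_(i in S) \sum_(j < n) u 0 i * H i j * v 0 j).

Definition admissible (R : realType) n (u v : 'rV[R]_n) (S : {set 'I_n}) : bool :=
  (S != finset.set0) && (\sum_(i in S) u 0 i * v 0 i <= (\sum_(i < n) u 0 i * v 0 i) / 2).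

(* edge expansion: minimum of phi_S over admissible S (1 if there is none;
   note phi_S <= 1 for nonnegative H, so the default never alters the min) *)
Definition edge_expansion (R : realType) n (H : 'M[R]_n) (u v : 'rV[R]_n) : R :=
  \big[Num.min/1]_(S : {set 'I_n} | admissible u v S) phiS H u v S.

Definition norm2 (R : realType) n (x : 'cV[R]_n) : R :=
  Num.sqrt (\sum_i x i 0 ^+ 2).
Definition opnorm2 (R : realType) n (M : 'M[R]_n) : R :=
  sup [set norm2 (M *m x) | x in [set x : 'cV[R]_n | norm2 x = 1]].

Definition eig_mult (R : realType) n (M : 'M[R]_n) (z : complex R) : nat :=
  mup z (map_poly (real_complex R) (char_poly M)).

From HB Require Import structures.
From mathcomp Require Import all_boot all_order all_algebra.
From mathcomp Require Import classical_sets reals.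
From mathcomp Require Import complex.
From mathcomp Require Import ring.
Set Implicit Arguments. Unset Strict Implicit. Unset Printing Implicit Defensive.
Import Order.TTheory GRing.Theory Num.Theory.
Local Open Scope ring_scope.

(* Writing d_i = sqrt (u_i / v_i) and w_i = sqrt (u_i v_i), the matrix A is the
   diagonal similarity A_ij = d_i R_ij / d_j, so it has the characteristic
   polynomial of R.  Since w_i d_i = u_i and w_i / d_i = v_i, one gets
   w_i A_ij w_j = u_i R_ij v_j and w_i^2 = u_i v_i: every phi_S and every
   admissibility condition is unchanged, and reversibility of R becomes symmetry
   of A.  Finally w is a positive left and right eigenvector of the nonnegative
   matrix A for the eigenvalue 1, so Cauchy-Schwarz weighted by w gives
   |Ax| <= |x|, with equality at x = w (a unit vector since <u, v> = 1). *)

Lemma char_poly_conj (F : comNzRingType) n (D E M : 'M[F]_n) :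
  D *m E = 1%:M -> char_poly (D *m M *m E) = char_poly M.
Proof.
move=> DE.
rewrite /char_poly /char_poly_mx !map_mxM.
have {1}->: ('X%:M : 'M[{poly F}]_n) = map_mx polyC D *m 'X%:M *m map_mx polyC E.
  by rewrite scalar_mxC -mulmxA -map_mxM DE map_scalar_mx /= polyC1 mulmx1.
rewrite -mulmxBl -mulmxBr !det_mulmx mulrAC -det_mulmx -map_mxM DE.
by rewrite map_scalar_mx /= polyC1 det1 mul1r.
Qed.

Definition diag_conjmx (F : fieldType) n (d : 'rV[F]_n) (M : 'M[F]_n) : 'M[F]_n :=
  \matrix_(i, j) (d 0 i * M i j / d 0 j).

Lemma diag_conjmx_mul (F : fieldType) n (d e : 'rV[F]_n) (M : 'M[F]_n) :
  (forall i, e 0 i = (d 0 i)^-1) -> diag_mx d *m M *m diag_mx e = diag_conjmx d M.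
Proof. by move=> de; apply/matrixP => i j; rewrite mul_mx_diag mul_diag_mx !mxE de. Qed.

Lemma char_poly_diag_conjmx (F : fieldType) n (d : 'rV[F]_n) (M : 'M[F]_n) :
  (forall i, d 0 i != 0) -> char_poly (diag_conjmx d M) = char_poly M.
Proof.
move=> d_neq0; pose dV := \row_i (d 0 i)^-1.
rewrite -(@diag_conjmx_mul _ _ _ dV) => [|i]; last by rewrite mxE.
apply: char_poly_conj; rewrite mulmx_diag -diag_const_mx; congr diag_mx.
by apply/rowP => i; rewrite !mxE divff.
Qed.

Section WeightedSimilarity.

Variables (R : realType) (n : nat) (P : 'M[R]_n) (u v w d : 'rV[R]_n).
Hypotheses (w_gt0 : forall i, 0 < w 0 i) (d_gt0 : forall i, 0 < d 0 i).
Hypotheses (wd_u : forall i, w 0 i * d 0 i = u 0 i) (wVd_v : forall i, w 0 i / d 0 i = v 0 i).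

Local Notation A := (diag_conjmx d P).

Let w_neq0 i : w 0 i != 0. Proof. exact: lt0r_neq0. Qed.
Let d_neq0 i : d 0 i != 0. Proof. exact: lt0r_neq0. Qed.

Let sqr_weight i : w 0 i * w 0 i = u 0 i * v 0 i.
Proof. by rewrite -wd_u -wVd_v; field; rewrite ?w_neq0 ?d_neq0. Qed.

Lemma diag_conjmxE_weight i j : A i j = u 0 i * P i j * v 0 j / (w 0 i * w 0 j).
Proof. by rewrite mxE -wd_u -wVd_v; field; rewrite ?w_neq0 ?d_neq0. Qed.

Lemma diag_conjmx_nonneg : nonneg_mx P -> nonneg_mx A.
Proof. by move=> P_ge0 i j; rewrite mxE divr_ge0 ?mulr_ge0 ?P_ge0 ?ltW ?d_gt0. Qed.

Lemma diag_conjmx_right_eigen : P *m v^T = v^T -> A *m w^T = w^T.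
Proof.
move/matrixP=> Pv; apply/matrixP => i k; rewrite ord1 mxE.
transitivity (d 0 i * v 0 i); last by rewrite mxE -wVd_v; field; rewrite ?w_neq0 ?d_neq0.
have := Pv i 0; rewrite !mxE => <-; rewrite mulr_sumr; apply: eq_bigr => j _.
by rewrite !mxE -wVd_v; field; rewrite ?w_neq0 ?d_neq0.
Qed.

Lemma diag_conjmx_left_eigen : u *m P = u -> w *m A = w.
Proof.
move/matrixP=> uP; apply/matrixP => k j; rewrite ord1 mxE.
transitivity (u 0 j / d 0 j); last by rewrite -wd_u; field; rewrite ?w_neq0 ?d_neq0.
have := uP 0 j; rewrite !mxE => <-; rewrite mulr_suml; apply: eq_bigr => i _.
by rewrite !mxE -wd_u; field; rewrite ?w_neq0 ?d_neq0.
Qed.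

Lemma edge_expansion_diag_conjmx : edge_expansion A w w = edge_expansion P u v.
Proof.
rewrite /edge_expansion; apply: eq_big => [S|S _].
  by rewrite /admissible !(eq_bigr _ (fun i _ => sqr_weight i)).
by congr (_ / _); apply: eq_bigr => i _; apply: eq_bigr => j _;
  rewrite diag_conjmxE_weight; field; rewrite ?w_neq0 ?d_neq0.
Qed.

Lemma diag_conjmx_sym :
  Dg u *m P *m Dg v = Dg v *m P^T *m Dg u -> A^T = A.
Proof.
move/matrixP=> rev; apply/matrixP => i j; rewrite mxE !diag_conjmxE_weight.
move: (rev j i); rewrite /Dg !mul_mx_diag !mul_diag_mx !mxE => ->.
by rewrite [w 0 j * _]mulrC; congr (_ / _); ring.
Qed.

End WeightedSimilarity.

Lemma sqr_sum_le_weighted (R : realFieldType) (I : finType) (a x w : I -> R) :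
  (forall j, 0 <= a j) -> (forall j, 0 < w j) ->
  (\sum_j a j * x j) ^+ 2 <= (\sum_j a j * x j ^+ 2 / w j) * (\sum_j a j * w j).
Proof.
move=> a_ge0 w_gt0.
have amgm j k : 2 * (x j * x k) <= x j ^+ 2 / w j * w k + x k ^+ 2 / w k * w j.
  have wj := w_gt0 j; have wk := w_gt0 k.
  rewrite -subr_ge0.
  have -> : x j ^+ 2 / w j * w k + x k ^+ 2 / w k * w j - 2 * (x j * x k)
          = (x j * w k - x k * w j) ^+ 2 / (w j * w k).
    by field; rewrite !lt0r_neq0.
  by rewrite divr_ge0 ?sqr_ge0 ?mulr_ge0 ?ltW.
have symmetrize (F : I -> I -> R) :
    2 * \sum_j \sum_k F j k = \sum_j \sum_k (F j k + F k j).
  by rewrite mulr2n mulrDl mul1r {2}exchange_big -big_split; under eq_bigr do rewrite -big_split.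
rewrite -(ler_pM2l (ltr0n R 2)) expr2 !mulr_suml; under eq_bigr do rewrite mulr_sumr.
rewrite symmetrize; under [in X in _ <= X]eq_bigr do rewrite mulr_sumr.
rewrite symmetrize; apply: ler_sum => j _; apply: ler_sum => k _.
have := ler_wpM2l (mulr_ge0 (a_ge0 j) (a_ge0 k)) (amgm j k).
by congr (_ <= _); ring.
Qed.

Section OperatorNorm.

Variables (R : realType) (n : nat) (A : 'M[R]_n) (w : 'rV[R]_n).
Hypotheses (A_ge0 : nonneg_mx A) (w_pos : positive_rv w).
Hypotheses (Aw : A *m w^T = w^T) (wA : w *m A = w).

Lemma norm2_mulmx_le (x : 'cV[R]_n) : norm2 (A *m x) <= norm2 x.
Proof.
have row_sum i : \sum_j A i j * w 0 j = w 0 i.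
  by move/matrixP: Aw => /(_ i 0); rewrite !mxE => <-; apply: eq_bigr => j _; rewrite mxE.
have col_sum j : \sum_i w 0 i * A i j = w 0 j.
  by move/matrixP: wA => /(_ 0 j); rewrite mxE.
rewrite ler_sqrt; last by apply: sumr_ge0 => i _; apply: sqr_ge0.
apply: (@le_trans _ _ (\sum_i (\sum_j A i j * x j 0 ^+ 2 / w 0 j) * w 0 i)).
  apply: ler_sum => i _; rewrite mxE -row_sum.
  exact: sqr_sum_le_weighted.
rewrite le_eqVlt; apply/predU1l.
under eq_bigr do rewrite mulr_suml.
rewrite exchange_big; apply: eq_bigr => j _.
transitivity ((\sum_i w 0 i * A i j) * (x j 0 ^+ 2 / w 0 j)).
  by rewrite mulr_suml; apply: eq_bigr => i _; ring.
by rewrite col_sum mulrC divfK ?lt0r_neq0.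
Qed.

Lemma opnorm2_eq1 : norm2 w^T = 1 -> opnorm2 A = 1.
Proof.
move=> w1; rewrite /opnorm2; set E := (X in sup X).
have E1 : E 1 by exists w^T; rewrite //= Aw.
have E_le1 : ubound E 1 by move=> _ [x /= x1 <-]; rewrite -x1 norm2_mulmx_le.
apply/le_anti/andP; split; first by apply: ge_sup => //; exists 1.
by apply: sup_upper_bound => //; split; exists 1.
Qed.

End OperatorNorm.

Section SqrtRescaling.

Variables (R : realType) (n : nat) (u v : 'rV[R]_n).
Hypotheses (u_pos : positive_rv u) (v_pos : positive_rv v).

Local Notation d := (\row_i (Num.sqrt (u 0 i) / Num.sqrt (v 0 i))).
Local Notation w := (\row_i Num.sqrt (u 0 i * v 0 i)).

Lemma sqrt_rescale_diag_conjmx (P : 'M[R]_n) :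
  Dg (vsqrt u) *m Dg (vinvsqrt v) *m P *m Dg (vinvsqrt u) *m Dg (vsqrt v)
  = diag_conjmx d P.
Proof.
rewrite -(@diag_conjmx_mul _ _ _ (\row_i ((Num.sqrt (u 0 i))^-1 * Num.sqrt (v 0 i)))).
  rewrite /Dg -mulmxA !mulmx_diag.
  by congr (diag_mx _ *m _ *m diag_mx _); apply/rowP => i; rewrite !mxE.
by move=> i; rewrite !mxE invfM invrK.
Qed.

Let sqrt_u_gt0 i : 0 < Num.sqrt (u 0 i). Proof. by rewrite sqrtr_gt0. Qed.
Let sqrt_v_gt0 i : 0 < Num.sqrt (v 0 i). Proof. by rewrite sqrtr_gt0. Qed.

Lemma sqrt_weight_gt0 i : 0 < w 0 i.
Proof. by rewrite mxE sqrtr_gt0 mulr_gt0. Qed.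

Lemma sqrt_ratio_gt0 i : 0 < d 0 i.
Proof. by rewrite mxE divr_gt0. Qed.

Lemma sqrt_weight_mul_ratio i : w 0 i * d 0 i = u 0 i.
Proof.
rewrite !mxE sqrtrM ?ltW // mulrAC -mulrA divfK ?lt0r_neq0 //.
by rewrite -expr2 sqr_sqrtr ?ltW.
Qed.

Lemma sqrt_weight_div_ratio i : w 0 i / d 0 i = v 0 i.
Proof.
rewrite !mxE sqrtrM ?ltW // invf_div [_ * Num.sqrt _]mulrC mulrAC -mulrA.
by rewrite divfK ?lt0r_neq0 // -expr2 sqr_sqrtr ?ltW.
Qed.

Lemma norm2_sqrt_weight : \sum_i u 0 i * v 0 i = 1 -> norm2 w^T = 1.
Proof.
move=> uv1; rewrite /norm2 -sqrtr1 -uv1; congr Num.sqrt; apply: eq_bigr => i _.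
by rewrite !mxE sqr_sqrtr // mulr_ge0 ?ltW.
Qed.

End SqrtRescaling.

Theorem lemma3p3 (R : realType) (n : nat) (P : 'M[R]_n) (u v : 'rV[R]_n) :
  nonneg_mx P -> irreducible_mx P ->
  positive_rv u -> positive_rv v ->
  u *m P = u -> P *m v^T = v^T ->
  \sum_(i < n) u 0 i * v 0 i = 1 ->
  let A := Dg (vsqrt u) *m Dg (vinvsqrt v) *m P *m Dg (vinvsqrt u) *m Dg (vsqrt v) in
  let w := \row_i Num.sqrt (u 0 i * v 0 i) in
  [/\ edge_expansion A w w = edge_expansion P u v,
      (forall z : R[i], eig_mult A z = eig_mult P z),
      opnorm2 A = 1
    & (Dg u *m P *m Dg v = Dg v *m P^T *m Dg u -> A^T = A)].
Proof.
move=> P_ge0 _ u_pos v_pos uP Pv uv1 A w; rewrite {}/A sqrt_rescale_diag_conjmx.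
have w_gt0 := sqrt_weight_gt0 u_pos v_pos.
have d_gt0 := sqrt_ratio_gt0 u_pos v_pos.
have wd_u := sqrt_weight_mul_ratio u_pos v_pos.
have wVd_v := sqrt_weight_div_ratio u_pos v_pos.
split.
- exact: edge_expansion_diag_conjmx.
- by move=> z; rewrite /eig_mult char_poly_diag_conjmx // => i; rewrite lt0r_neq0.
- apply: (opnorm2_eq1 (w := w)); rewrite ?norm2_sqrt_weight //.
  + exact: diag_conjmx_nonneg.
  + exact: diag_conjmx_right_eigen.
  + exact: diag_conjmx_left_eigen.
- exact: (diag_conjmx_sym w_gt0).
Qed.
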